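(* Let $q\geq 4$ be an integer and let $G=K_{q,q,\dots,q}$ be the complete $r$-partite graph on $rq$ vertices with all parts of size $q$. Then $\mathcal{Z}^{\mathrm{TS}}_+(G)$ and $\mathcal{Z}^{\mathrm{TE}}_+(G)$ both have exactly $r$ connected components.
   Context: PSD forcing: vertices are colored blue or white; if $B$ is the current set of blue vertices, $C$ a connected component of $G-B$, and $u$ a blue vertex with $N_G(u)\cap V(C)=\{v\}$, then $u$ may force $v$ to become blue. A PSD forcing set is a set of initially blue vertices from which repeated application of this rule turns every vertex blue; $\mathrm{Z}_+(G)$ is the minimum size of a PSD forcing set. $\mathcal{Z}^{\mathrm{TE}}_+(G)$ has as vertices the minimum PSD forcing sets of $G$, with $S_1S_2$ an edge iff $S_1\setminus S_2=\{v_1\}$ and $S_2\setminus S_1=\{v_2\}$ for some vertices $v_1,v_2$; $\mathcal{Z}^{\mathrm{TS}}_+(G)$ has the same vertices with the additional requirement $v_1v_2\in E(G)$. *)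

From mathcomp Require Import all_boot.
Set Implicit Arguments. Unset Strict Implicit. Unset Printing Implicit Defensive.

Section PSD.
Variables (T : finType) (e : rel T).
(* e is the (symmetric, irreflexive) adjacency relation of a simple graph on T *)

Definition del_rel (B : {set T}) : rel T :=
  [rel x y | [&& e x y, x \notin B & y \notin B]].

Definition comp_of (B : {set T}) (v : T) : {set T} :=
  [set w | connect (del_rel B) v w].

Definition psd_force (B : {set T}) (u v : T) : bool :=
  [&& u \in B, v \notin B &
      [set w in comp_of B v | e u w] == [set v]].

Definition psd_step : rel {set T} :=
  [rel B B' | [exists u, exists v, psd_force B u v && (B' == v |: B)]].

Definition psd_forcing_set (S : {set T}) : bool :=
  connect psd_step S [set: T].

Definition min_psd_forcing_set (S : {set T}) : bool :=
  psd_forcing_set S &&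
  [forall S' : {set T}, psd_forcing_set S' ==> (#|S| <= #|S'|)].

Definition TE_adj : rel {set T} :=
  [rel S1 S2 | [exists v1, exists v2,
     (S1 :\: S2 == [set v1]) && (S2 :\: S1 == [set v2])]].

Definition TS_adj : rel {set T} :=
  [rel S1 S2 | [exists v1, exists v2,
     [&& S1 :\: S2 == [set v1], S2 :\: S1 == [set v2] & e v1 v2]]].

Definition num_components (V : {set {set T}}) (a : rel {set T}) : nat :=
  let aV := [rel X Y | [&& X \in V, Y \in V & a X Y]] in
  #|[set [set Y in V | connect aV X Y] | X in V]|.

Definition ZTE_components : nat :=
  num_components [set S | min_psd_forcing_set S] TE_adj.
Definition ZTS_components : nat :=
  num_components [set S | min_psd_forcing_set S] TS_adj.
End PSD.

Definition Kmulti_rel (r q : nat) : rel ('I_r * 'I_q) :=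
  [rel x y | x.1 != y.1].
Arguments Kmulti_rel : clear implicits.

From mathcomp Require Import all_boot zify.
Set Implicit Arguments. Unset Strict Implicit. Unset Printing Implicit Defensive.

(* The white set W of a PSD forcing set S of K_{q,...,q} has at most q vertices,
   all but at most one of them in a single part: look at the first force u -> v.
   Either every white vertex lies in the part of v, or G - S is connected and u
   sees no white vertex outside its own part except v.  Complements of parts
   are PSD forcing sets, so the minimum ones are exactly those with q white
   vertices, and each is labelled by the part holding q - 1 of them.  A token
   exchange keeps the label when q >= 4 (two different labels would leave room
   for at most 3 white vertices), and every set labelled i is one token slide
   away from the complement of part i: one component per part.  For r = 1 there
   are no edges and only V(G) forces. *)

(* [lia] compares atoms syntactically, but cardinalities produced by different
   lemmas may differ in their (convertible) finType instances; [set] identifies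
   them up to conversion before calling [lia]. *)
Ltac card_lia :=
  repeat match goal with H : context [card.body _] |- _ => revert H end;
  repeat match goal with |- context [card.body ?M] =>
    let n := fresh "n" in set n := card.body M; clearbody n end;
  intros; lia.

Section PSDForcing.
Variables (T : finType) (e : rel T).

Lemma psd_force_adj B u v : psd_force e B u v -> e u v.
Proof.
case/and3P => _ _ /eqP/setP/(_ v).
by rewrite !inE eqxx => /andP [].
Qed.

Lemma psd_force_comp B u v w :
  psd_force e B u v -> w \in comp_of e B v -> e u w -> w = v.
Proof.
case/and3P => _ _ /eqP/setP/(_ w) Nuv wC uw.
by move: Nuv; rewrite in_set1 in_set wC uw => /esym/eqP.
Qed.

Lemma psd_forcing_set_exists_force S :
  psd_forcing_set e S -> S != setT -> exists u v, psd_force e S u v.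
Proof.
case/connectP => [[|S1 p]] /=; first by move=> _ ->; rewrite eqxx.
case/andP => /existsP [u /existsP [v /andP [uv _]]] _ _ _.
by exists u, v.
Qed.

Lemma comp_of_isolated (B : {set T}) v :
  (forall w, e v w -> w \in B) -> comp_of e B v = [set v].
Proof.
move=> NvB; apply/setP => w; rewrite !inE.
apply/idP/eqP => [|->]; last exact: connect0.
case/connectP => [[|x p]] /=; first by move=> _ ->.
by case/andP => /and3P [/NvB ->].
Qed.

Lemma psd_force_isolated (B : {set T}) u v :
  u \in B -> v \notin B -> e u v -> (forall w, e v w -> w \in B) ->
  psd_force e B u v.
Proof.
move=> uB vB uv NvB; rewrite /psd_force uB vB comp_of_isolated //=.
by apply/eqP/setP => w; rewrite !inE; case: eqP => // ->.
Qed.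

(* Each white vertex is then a singleton component of G - S. *)
Lemma psd_forcing_set_stable S :
  {in ~: S &, forall v w, ~~ e v w} ->
  {in ~: S, forall v, exists2 u, u \in S & e u v} ->
  psd_forcing_set e S.
Proof.
move Hn : #|~: S| => n; elim: n S Hn => [|n IH] S Hn stableW blueN.
  have W0 : ~: S = set0 by apply/eqP; rewrite -cards_eq0 Hn.
  by rewrite -[S]setCK W0 setC0; apply: connect0.
have [v vW] : exists v, v \in ~: S by apply/set0Pn; rewrite -card_gt0 Hn.
have [u uS uv] := blueN v vW.
have Fuv : psd_force e S u v.
  apply: psd_force_isolated => //; first by rewrite -in_setC.
  by move=> w; apply: contraTT => wS; apply: stableW; rewrite // inE.
have EC : ~: (v |: S) = ~: S :\ v by apply/setP => w; rewrite !inE negb_or.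
apply: connect_trans (connect1 _) (IH (v |: S) _ _ _).
- by apply/existsP; exists u; apply/existsP; exists v; rewrite Fuv eqxx.
- by move: Hn; rewrite EC (cardsD1 v) vW; case.
- by move=> x y; rewrite EC => /setD1P [_ xW] /setD1P [_ yW]; apply: stableW.
- move=> x; rewrite EC => /setD1P [_ /blueN [w wS wx]].
  by exists w; rewrite // inE wS orbT.
Qed.

Lemma min_psd_forcing_set_edgeless :
  (forall x y, ~~ e x y) -> [set S | min_psd_forcing_set e S] = [set setT].
Proof.
move=> noE.
have forcingT S : psd_forcing_set e S -> S = setT.
  move=> F; apply/eqP; apply: contraT => /(psd_forcing_set_exists_force F) [u [v]].
  by move/psd_force_adj; rewrite (negbTE (noE u v)).
apply/setP => S; rewrite !inE; apply/andP/eqP => [[/forcingT //]|->].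
split; first exact: connect0.
by apply/forallP => S'; apply/implyP => /forcingT ->.
Qed.

Lemma TS_adj_TE : subrel (TS_adj e) (@TE_adj T).
Proof.
move=> X Y /existsP [v1 /existsP [v2 /and3P [h1 h2 _]]].
by apply/existsP; exists v1; apply/existsP; exists v2; rewrite h1 h2.
Qed.

Lemma TE_adj_sym : symmetric (@TE_adj T).
Proof.
move=> X Y; apply/existsP/existsP => -[v1 /existsP [v2 /andP [h1 h2]]];
  by exists v2; apply/existsP; exists v1; rewrite h1 h2.
Qed.

Lemma TS_adj_sym : symmetric e -> symmetric (TS_adj e).
Proof.
move=> e_sym X Y; apply/existsP/existsP => -[v1 /existsP [v2 /and3P [h1 h2 h]]];
  by exists v2; apply/existsP; exists v1; rewrite h1 h2 e_sym.
Qed.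

Lemma TE_adj_card_diff (X Y : {set T}) : TE_adj X Y -> #|Y :\: X| = 1.
Proof. by case/existsP => v1 /existsP [v2 /andP [_ /eqP ->]]; rewrite cards1. Qed.

End PSDForcing.

Section Components.
Variables (T : finType) (V : {set {set T}}) (a : rel {set T}).
Hypothesis a_sym : symmetric a.

Local Notation aV := [rel X Y | [&& X \in V, Y \in V & a X Y]].

Lemma num_components_set1 X : num_components [set X] a = 1.
Proof. by rewrite /num_components imset_set1 cards1. Qed.

Variables (I : finType) (label : {set T} -> I -> bool) (center : I -> {set T}).
Hypothesis center_in : forall i, center i \in V.
Hypothesis label_center : forall i, label (center i) i.
Hypothesis label_total : {in V, forall X, exists i, label X i}.
Hypothesis adj_center : {in V, forall X i, label X i -> X != center i -> a X (center i)}.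
Hypothesis label_adj :
  {in V &, forall X Y i j, (X == Y) || a X Y -> label X i -> label Y j -> i = j}.

Lemma label_connect X Y i : X \in V -> connect aV X Y -> label X i -> label Y i.
Proof.
move=> XV /connectP [p]; elim: p X XV => [|Z p IH] X XV /=; first by move=> _ ->.
case/andP => /and3P [_ ZV aXZ] pZ YZ lXi.
have [j lZj] := label_total ZV.
have ij : i = j by apply: (label_adj XV ZV _ lXi lZj); rewrite aXZ orbT.
by apply: IH ZV pZ YZ _; rewrite ij.
Qed.

Lemma connect_center X i : X \in V -> label X i -> connect aV X (center i).
Proof.
move=> XV lXi; have [-> //|ne] := eqVneq X (center i).
by apply: connect1; rewrite /= XV center_in adj_center.
Qed.

Lemma num_components_eq_card : num_components V a = #|I|.
Proof.
have aV_sym : connect_sym aV.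
  by apply: sym_connect_sym => X Y /=; rewrite a_sym andbCA.
rewrite /num_components /=.
set comp := fun X => [set Y in V | connect aV X Y].
have -> : [set comp X | X in V] = [set comp (center i) | i in I].
  apply/setP => K; apply/imsetP/imsetP => [[X XV ->]|[i _ ->]].
  - have [i lXi] := label_total XV; exists i => //.
    have cXc := connect_center XV lXi.
    apply/setP => Y; rewrite !inE; apply: andb_id2l => _; apply/idP/idP.
      by apply: connect_trans; rewrite aV_sym.
    exact: connect_trans.
  - by exists (center i).
rewrite card_in_imset ?cardsT // => i j _ _ /setP /(_ (center j)).
rewrite !inE center_in connect0 /= => /(label_connect (center_in i)).
move=> /(_ _ (label_center i)) lji.
by apply: (label_adj (center_in j) (center_in j) _ lji (label_center j)); rewrite eqxx.
Qed.

End Components.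

Section Kmulti.
Variables r q : nat.
Local Notation T := ('I_r * 'I_q)%type.
Local Notation e := (Kmulti_rel r q).

Definition part (i : 'I_r) : {set T} := [set x | x.1 == i].

Lemma in_part x i : (x \in part i) = (x.1 == i).
Proof. by rewrite inE. Qed.

Lemma card_part i : #|part i| = q.
Proof.
have -> : part i = setX [set i] [set: 'I_q] by apply/setP => -[x y]; rewrite !inE andbT.
by rewrite cardsX cards1 cardsT card_ord mul1n.
Qed.

Lemma Kmulti_relE x y : e x y = (x.1 != y.1).
Proof. by []. Qed.

Lemma Kmulti_sym : symmetric e.
Proof. by move=> x y; rewrite !Kmulti_relE eq_sym. Qed.

Definition near_part (W : {set T}) i := #|W :\: part i| <= 1.

Lemma comp_of_Kmulti (S : {set T}) (v : T) :
  v \notin S -> ~: S \subset part v.1 \/ ~: S \subset comp_of e S v.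
Proof.
move=> vS; have [|/subsetPn [z zW]] := boolP (~: S \subset part v.1); first by left.
rewrite inE in zW; rewrite in_part eq_sym => zv; right.
have vz : connect (del_rel e S) v z.
  by apply: connect1; rewrite /del_rel /= Kmulti_relE zv vS zW.
apply/subsetP => w; rewrite !inE => wS.
have [wv|wv] := eqVneq w.1 v.1.
  apply: connect_trans vz (connect1 _).
  by rewrite /del_rel /= Kmulti_relE wv eq_sym zv zW wS.
by apply: connect1; rewrite /del_rel /= Kmulti_relE eq_sym wv vS wS.
Qed.

Lemma psd_force_Kmulti (S : {set T}) (u v : T) :
  psd_force e S u v -> #|~: S| <= q /\ exists i, near_part (~: S) i.
Proof.
move=> F; have /and3P [uS vS _] := F.
have [Wv|WC] := comp_of_Kmulti vS.
  split; first by rewrite -[X in _ <= X](card_part v.1) subset_leq_card.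
  by exists v.1; move: Wv; rewrite /near_part -setD_eq0 => /eqP ->; rewrite cards0.
have outside : ~: S :\: part u.1 \subset [set v].
  apply/subsetP => w /setDP [wW wP]; rewrite inE; apply/eqP.
  apply: psd_force_comp F (subsetP WC w wW) _.
  by rewrite in_part in wP; rewrite Kmulti_relE eq_sym.
have inside : ~: S :&: part u.1 \subset part u.1 :\ u.
  apply/subsetP => w /setIP [wW wP]; rewrite !inE in wW wP *; rewrite wP andbT.
  by apply: contraNneq wW => ->.
have := subset_leq_card outside; have := subset_leq_card inside.
have := cardsD1 u (part u.1); have := cardsID (part u.1) (~: S).
rewrite cards1 card_part in_part eqxx add1n => WP Pu.
by split; [card_lia | exists u.1; rewrite /near_part; card_lia].
Qed.

Lemma card_le_near_part (W W' : {set T}) i j : i != j ->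
  #|W| <= #|W :\: part i| + #|W' :\: part j| + #|W :\: W'|.
Proof.
move=> ij.
have cover : W \subset (W :\: part i) :|: (W' :\: part j) :|: (W :\: W').
  apply/subsetP => w wW; rewrite !inE wW /= andbT.
  by case: (w \in W'); case: eqP => //= ->; rewrite ij.
apply: leq_trans (subset_leq_card cover) _; rewrite !cardsU; lia.
Qed.

Lemma near_part_unique (W W' : {set T}) i j :
  3 < #|W| -> #|W :\: W'| <= 1 -> near_part W i -> near_part W' j -> i = j.
Proof.
rewrite /near_part => W3 WW' Wi W'j; have [//|ij] := eqVneq i j.
by have := card_le_near_part W W' ij; lia.
Qed.

Lemma TS_adj_compl_part (X : {set T}) i :
  #|~: X| = q -> near_part (~: X) i -> X != ~: part i -> TS_adj e X (~: part i).
Proof.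
move=> cX Xi XnP; set W := ~: X in cX Xi.
have WP := cardsID (part i) W; have PW := cardsID W (part i).
rewrite card_part setIC in PW.
have out1 : #|W :\: part i| = 1.
  move: Xi; rewrite /near_part leq_eqVlt ltnS leqn0 cards_eq0 setD_eq0.
  case/predU1P => // WsubP; case/negP: XnP.
  have -> : part i = W by apply/eqP; rewrite eq_sym eqEcard WsubP card_part cX leqnn.
  by rewrite /W setCK.
have in1 : #|part i :\: W| = 1 by lia.
move/eqP/cards1P: out1 => [p Ep]; move/eqP/cards1P: in1 => [x Ex].
have /setDP [_ pP] : p \in W :\: part i by rewrite Ep set11.
have /setDP [/[!in_part] xP _] : x \in part i :\: W by rewrite Ex set11.
have E1 : X :\: ~: part i = part i :\: W by rewrite /W !setDE !setCK setIC.
have E2 : ~: part i :\: X = W :\: part i by rewrite /W !setDE setIC.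
apply/existsP; exists x; apply/existsP; exists p; rewrite E1 E2 Ex Ep !eqxx /=.
by rewrite Kmulti_relE (eqP xP) eq_sym -in_part.
Qed.

Section TwoParts.
Hypothesis hr : 1 < r.

Lemma psd_forcing_compl_part i : psd_forcing_set e (~: part i).
Proof.
have [j ji] : exists j : 'I_r, j != i.
  have [->|ne] := eqVneq i (Ordinal hr); last by exists (Ordinal hr); rewrite eq_sym.
  by exists (Ordinal (ltnW hr)); apply/eqP => /(f_equal val).
apply: psd_forcing_set_stable => [v w | v]; rewrite setCK !in_part.
  by move=> /eqP vi /eqP wi; rewrite Kmulti_relE vi wi eqxx.
move=> /eqP vi; exists (j, v.2).
  by rewrite in_setC in_part.
by rewrite Kmulti_relE /= vi.
Qed.

Lemma psd_forcing_set_Kmulti (S : {set T}) :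
  psd_forcing_set e S -> #|~: S| <= q /\ exists i, near_part (~: S) i.
Proof.
move=> F; have [->|nT] := eqVneq S setT.
  rewrite setCT cards0; split => //.
  by exists (Ordinal (ltnW hr)); rewrite /near_part set0D cards0.
by have [u [v]] := psd_forcing_set_exists_force F nT; apply: psd_force_Kmulti.
Qed.

Lemma min_psd_forcing_set_Kmulti (S : {set T}) :
  min_psd_forcing_set e S = psd_forcing_set e S && (#|~: S| == q).
Proof.
rewrite /min_psd_forcing_set; have [F|//] := boolP (psd_forcing_set e S).
have [WS _] := psd_forcing_set_Kmulti F; have cS := cardsC S.
apply/forallP/eqP => [minS | cW S'].
  set P := ~: part (Ordinal (ltnW hr)).
  have SP := implyP (minS P) (psd_forcing_compl_part _).
  by have := cardsC P; rewrite setCK card_part; card_lia.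
apply/implyP => /psd_forcing_set_Kmulti [WS' _].
by have := cardsC S'; card_lia.
Qed.

Lemma num_components_Kmulti (a : rel {set T}) :
  3 < q -> symmetric a -> subrel (TS_adj e) a -> subrel a (@TE_adj T) ->
  num_components [set S | min_psd_forcing_set e S] a = r.
Proof.
move=> hq a_sym TSa aTE; rewrite -[RHS](card_ord r).
have memV X : (X \in [set S | min_psd_forcing_set e S])
              = psd_forcing_set e X && (#|~: X| == q).
  by rewrite inE min_psd_forcing_set_Kmulti.
apply: (num_components_eq_card (label := fun X i => near_part (~: X) i)
                                (center := fun i => ~: part i) a_sym).
- by move=> i; rewrite memV psd_forcing_compl_part setCK card_part eqxx.
- by move=> i; rewrite /near_part setCK setDv cards0.
- by move=> X; rewrite memV => /andP [/psd_forcing_set_Kmulti []].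
- move=> X; rewrite memV => /andP [_ /eqP cX] i Xi XnP.
  exact/TSa/TS_adj_compl_part.
move=> X Y; rewrite !memV => /andP [_ /eqP cX] _ i j XY.
apply: near_part_unique; first by rewrite cX.
case/orP: XY => [/eqP ->|/aTE/TE_adj_card_diff]; first by rewrite setDv cards0.
by move=> YX; rewrite setDE setCK setIC -setDE YX.
Qed.

End TwoParts.
End Kmulti.

Theorem theorem4p15 (r q : nat) (hr : 0 < r) (hq : 4 <= q) :
  ZTS_components (Kmulti_rel r q) = r /\ ZTE_components (Kmulti_rel r q) = r.
Proof.
rewrite /ZTS_components /ZTE_components.
move: hr; rewrite leq_eqVlt => /predU1P [<-|hr2].
  rewrite min_psd_forcing_set_edgeless ?num_components_set1 // => x y.
  by rewrite /= negbK [x.1]ord1 [y.1]ord1.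
split; apply: num_components_Kmulti => //.
- exact: TS_adj_sym (@Kmulti_sym r q).
- exact: TS_adj_TE.
- exact: TE_adj_sym.
- exact: TS_adj_TE.
Qed.
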